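(* A uniformly random string over an alphabet of size $O(\varepsilon^{-3})$ satisfies the $\varepsilon$-self-matching property with constant probability.
   Context: A monotone matching between a string $S$ and itself is a set of pairs $(a_1,b_1),\dots,(a_m,b_m)$ with $a_1<\dots<a_m$, $b_1<\dots<b_m$ and $S[a_i]=S[b_i]$; a pair is bad if $a_i\ne b_i$. $S$ satisfies the $\varepsilon$-self-matching property if every monotone matching between $S$ and itself contains fewer than $\varepsilon|S|$ bad pairs. ''Constant probability'' means a probability bounded below by a positive constant independent of the string length. *)

From mathcomp Require Import all_boot all_order all_algebra.
From mathcomp Require Export reals.
Set Implicit Arguments. Unset Strict Implicit. Unset Printing Implicit Defensive.
Import Order.TTheory GRing.Theory Num.Theory.
Local Open Scope ring_scope.

(* A string of length n over the alphabet 'I_k is S : {ffun 'I_n -> 'I_k}. *)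

(* A monotone matching between S and itself, as a finite set M of index pairs
   (a,b) with S a = S b, such that any two pairs are ordered the same way in
   both coordinates; listing M in increasing order gives exactly
   a_1 < ... < a_m and b_1 < ... < b_m. *)
Definition monotone_matching (n k : nat) (S : {ffun 'I_n -> 'I_k})
    (M : {set 'I_n * 'I_n}) : bool :=
  [forall p in M, S p.1 == S p.2] &&
  [forall p in M, forall q in M, ((p.1 < q.1)%N == (p.2 < q.2)%N)].

Definition bad_pairs (n : nat) (M : {set 'I_n * 'I_n}) : nat :=
  #|[set p in M | p.1 != p.2]|.

Definition self_matching (R : realType) (eps : R) (n k : nat)
    (S : {ffun 'I_n -> 'I_k}) : bool :=
  [forall M : {set 'I_n * 'I_n},
     monotone_matching S M ==> ((bad_pairs M)%:R < eps * n%:R)].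

Definition prob_self_matching (R : realType) (eps : R) (n k : nat) : R :=
  (#|[set S : {ffun 'I_n -> 'I_k} | self_matching eps S]|)%:R / (k ^ n)%:R.

(* A string fails the eps-self-matching property only if it matches a monotone
   set P of exactly m = ceil(eps n) off-diagonal pairs.  Such a P is determined
   by its two coordinate projections, so there are at most C(n,m)^2 of them, and
   on a string matching P the letter at the larger index of each pair is forced
   by the one at the smaller index, which leaves at most k^(n-m) strings.  Since
   C(n,m) eps^m <= (e n eps / m)^m <= e^m, the union bound shows that a fraction
   at most C(n,m)^2 / k^m <= (2 e^2 / (k eps^2))^m / 2 <= 1/2 of the strings
   fail as soon as k >= 2 e^2 / eps^2. *)

From mathcomp Require Import all_boot all_order all_algebra.
From mathcomp Require Import reals sequences exp lra zify.
Import Order.TTheory GRing.Theory Num.Theory.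

Set Implicit Arguments. Unset Strict Implicit. Unset Printing Implicit Defensive.

Lemma ffact_leq_expn n m : (n ^_ m <= n ^ m)%N.
Proof.
rewrite ffact_prod -[X in n ^ X]card_ord -prod_nat_const.
by apply: leq_prod => i _; apply: leq_subr.
Qed.

Lemma exists_subset_card (T : finType) (B : {set T}) m : (m <= #|B|)%N ->
  exists2 P : {set T}, P \subset B & #|P| = m.
Proof.
rewrite -bin_gt0 -cards_draws => /card_gt0P[P].
by rewrite inE => /andP[sPB /eqP cP]; exists P.
Qed.

Section MonotonePairs.
Variable n : nat.
Implicit Types (P Q : {set 'I_n * 'I_n}) (p q : 'I_n * 'I_n) (A : {set 'I_n}).

Definition monotone_pairs P : bool :=
  [forall p in P, forall q in P, ((p.1 < q.1)%N == (p.2 < q.2)%N)].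

Definition off_diagonal P : bool := [forall p in P, p.1 != p.2].

Definition pairs_matched k (S : {ffun 'I_n -> 'I_k}) P : bool :=
  [forall p in P, S p.1 == S p.2].

Lemma monotone_matchingE k (S : {ffun 'I_n -> 'I_k}) M :
  monotone_matching S M = pairs_matched S M && monotone_pairs M.
Proof. by []. Qed.

Lemma monotone_pairsP P p q : monotone_pairs P -> p \in P -> q \in P ->
  (p.1 < q.1)%N = (p.2 < q.2)%N.
Proof. by move=> /forall_inP mP pP qP; move/forall_inP: (mP p pP) => /(_ q qP)/eqP. Qed.

Lemma monotone_pairsS P Q : P \subset Q -> monotone_pairs Q -> monotone_pairs P.
Proof.
move=> /subsetP sPQ mQ; apply/forall_inP => p pP; apply/forall_inP => q qP.
by rewrite (monotone_pairsP mQ (sPQ p pP) (sPQ q qP)).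
Qed.

Lemma pairs_matchedS k (S : {ffun 'I_n -> 'I_k}) P Q :
  P \subset Q -> pairs_matched S Q -> pairs_matched S P.
Proof. by move=> /subsetP sPQ /forall_inP mQ; apply/forall_inP => p /sPQ /mQ. Qed.

Lemma monotone_fst_inj P : monotone_pairs P -> {in P &, injective fst}.
Proof.
move=> mP [a b] [c d] pP qP /= eac; subst c.
have := monotone_pairsP mP pP qP; have := monotone_pairsP mP qP pP.
by rewrite /= ltnn; case: ltngtP => // /val_inj ->.
Qed.

Lemma monotone_snd_inj P : monotone_pairs P -> {in P &, injective snd}.
Proof.
move=> mP [a b] [c d] pP qP /= ebd; subst d.
have := monotone_pairsP mP pP qP; have := monotone_pairsP mP qP pP.
by rewrite /= ltnn; case: ltngtP => // /val_inj ->.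
Qed.

Definition pair_max p : 'I_n := if (p.1 < p.2)%N then p.2 else p.1.
Definition pair_min p : 'I_n := if (p.1 < p.2)%N then p.1 else p.2.

Lemma pair_min_lt_max p : p.1 != p.2 -> (pair_min p < pair_max p)%N.
Proof.
by rewrite /pair_min /pair_max; case: (ltngtP p.1 p.2) => // /val_inj ->; rewrite eqxx.
Qed.

Lemma pair_maxE p : pair_max p = maxn p.1 p.2 :> nat.
Proof. by rewrite /pair_max /maxn; case: ifP. Qed.

Lemma pair_max_inj P : monotone_pairs P -> off_diagonal P ->
  {in P &, injective pair_max}.
Proof.
move=> mP /forall_inP dP [a b] [c d] pP qP /(congr1 (@nat_of_ord n)).
rewrite !pair_maxE /= => eq_max.
have ac_bd : (a < c)%N <-> (b < d)%N by rewrite (monotone_pairsP mP pP qP).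
have ca_db : (c < a)%N <-> (d < b)%N by rewrite (monotone_pairsP mP qP pP).
have ab : (a : nat) <> b by move/val_inj=> ab; move: (dP _ pP); rewrite ab eqxx.
have cd : (c : nat) <> d by move/val_inj=> cd; move: (dP _ qP); rewrite cd eqxx.
suff [/val_inj -> /val_inj ->] : a = c :> nat /\ b = d :> nat by [].
lia.
Qed.

Lemma pairs_matched_min_max k (S : {ffun 'I_n -> 'I_k}) P p :
  pairs_matched S P -> p \in P -> S (pair_min p) = S (pair_max p).
Proof.
by move=> /forall_inP/(_ p) mP /mP /eqP; rewrite /pair_min /pair_max; case: ifP.
Qed.

Lemma pairs_matched_eq k (S S' : {ffun 'I_n -> 'I_k}) P :
  off_diagonal P -> pairs_matched S P -> pairs_matched S' P ->
  {in [predC pair_max @: P], S =1 S'} -> S = S'.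
Proof.
move=> /forall_inP dP mS mS' eqS.
have eq_below j (i : 'I_n) : (i < j)%N -> S i = S' i.
  elim: j i => // j IH i; rewrite ltnS => le_ij.
  case: (boolP (i \in pair_max @: P)) => [/imsetP[p pP def_i] | Di]; last exact: eqS.
  rewrite def_i -(pairs_matched_min_max mS pP) -(pairs_matched_min_max mS' pP).
  by apply: IH; rewrite (leq_trans (pair_min_lt_max (dP p pP))) -?def_i.
by apply/ffunP => i; exact: (eq_below i.+1 i (ltnSn i)).
Qed.

Lemma card_pairs_matched k P : monotone_pairs P -> off_diagonal P ->
  (#|[set S : {ffun 'I_n -> 'I_k.+1} | pairs_matched S P]| * k.+1 ^ #|P|
     <= k.+1 ^ n)%N.
Proof.
move=> mP dP; set E := [set S | _]; set D := pair_max @: P.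
have cardD : #|D| = #|P| by rewrite card_in_imset //; apply: pair_max_inj.
pose f (S : {ffun 'I_n -> 'I_k.+1}) := [ffun i => if i \in D then ord0 else S i].
have f_inj : {in E &, injective f}.
  move=> S S'; rewrite !inE => mS mS' /ffunP efS.
  apply: pairs_matched_eq dP mS mS' _ => i /negbTE Di.
  by move: (efS i); rewrite !ffunE Di.
have fE : f @: E \subset pffun_on ord0 (~: D) predT.
  apply/subsetP => _ /imsetP[S _ ->]; apply/pffun_onP; split => //.
  by apply/subsetP => i; rewrite !inE ffunE; apply: contraNN => ->.
rewrite -(card_in_imset f_inj) -cardD.
apply: leq_trans (leq_mul (subset_leq_card fE) (leqnn _)) _.
by rewrite card_pffun_on cardT size_enum_ord -expnD addnC cardsC card_ord.
Qed.

Definition set_rank A (x : 'I_n) : nat := #|[set a in A | (a < x)%N]|.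

Lemma set_rank_lt A (x y : 'I_n) : x \in A -> (x < y)%N ->
  (set_rank A x < set_rank A y)%N.
Proof.
move=> xA lt_xy; apply: proper_card; apply/properP; split.
  by apply/subsetP => a; rewrite !inE => /andP[-> /ltn_trans->].
by exists x; rewrite !inE ?xA ?lt_xy ?ltnn.
Qed.

Lemma set_rank_inj A : {in A &, injective (set_rank A)}.
Proof.
move=> x y xA yA eq_rk.
have [lt_xy|lt_yx|/val_inj //] := ltngtP x y.
- by have := set_rank_lt xA lt_xy; rewrite eq_rk ltnn.
- by have := set_rank_lt yA lt_yx; rewrite eq_rk ltnn.
Qed.

Lemma set_rank_imset P (g : 'I_n * 'I_n -> 'I_n) x : {in P &, injective g} ->
  set_rank (g @: P) x = #|[set q in P | (g q < x)%N]|.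
Proof.
move=> g_inj; rewrite /set_rank.
have -> : [set a in g @: P | (a < x)%N] = g @: [set q in P | (g q < x)%N].
  apply/setP => a; rewrite inE; apply/andP/imsetP.
    by case=> /imsetP[q qP ->] lt_qx; exists q; rewrite // inE qP.
  by case=> q; rewrite inE => /andP[qP lt_qx] ->; rewrite imset_f.
rewrite card_in_imset // => u v; rewrite !inE => /andP[uP _] /andP[vP _].
exact: g_inj.
Qed.

Lemma monotone_set_rank P p : monotone_pairs P -> p \in P ->
  set_rank (fst @: P) p.1 = set_rank (snd @: P) p.2.
Proof.
move=> mP pP; rewrite !set_rank_imset;
  [|exact: (monotone_snd_inj mP) | exact: (monotone_fst_inj mP)].
apply: eq_card => q; rewrite !inE.
by have [qP|//] := boolP (q \in P); rewrite (monotone_pairsP mP qP pP).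
Qed.

Lemma monotone_pairsE P : monotone_pairs P ->
  P = [set p | [&& p.1 \in fst @: P, p.2 \in snd @: P &
                  set_rank (fst @: P) p.1 == set_rank (snd @: P) p.2]].
Proof.
move=> mP; apply/setP => p; rewrite inE; apply/idP/and3P => [pP|].
  by rewrite (monotone_set_rank mP pP) !(imset_f _ pP).
case=> /imsetP[q qP eq1] p2P /eqP; rewrite eq1 (monotone_set_rank mP qP).
move=> /(set_rank_inj (imset_f _ qP) p2P) eq2.
by rewrite [p]surjective_pairing eq1 -eq2 -surjective_pairing.
Qed.

Lemma card_monotone_pairs m :
  (#|[set P : {set 'I_n * 'I_n} | monotone_pairs P & #|P| == m]| <= 'C(n, m) ^ 2)%N.
Proof.
set C := [set P | _ & _].
pose images P := (fst @: P, snd @: P).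
have images_inj : {in C &, injective images}.
  move=> P Q; rewrite !inE => /andP[mP _] /andP[mQ _] [eq1 eq2].
  by rewrite (monotone_pairsE mP) (monotone_pairsE mQ) eq1 eq2.
set draws := [set A : {set 'I_n} | #|A| == m].
have imagesC : images @: C \subset setX draws draws.
  apply/subsetP => _ /imsetP[P + ->]; rewrite !inE => /andP[mP cP] /=.
  by rewrite !card_in_imset ?cP //;
    [exact: (monotone_snd_inj mP) | exact: (monotone_fst_inj mP)].
rewrite -(card_in_imset images_inj) (leq_trans (subset_leq_card imagesC)) //.
by rewrite cardsX card_draws card_ord.
Qed.

Lemma card_union_matched k m (X : {set {ffun 'I_n -> 'I_k.+1}}) :
  (forall S, S \in X -> exists P : {set 'I_n * 'I_n},
     [&& monotone_pairs P, off_diagonal P, #|P| == m & pairs_matched S P]) ->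
  (#|X| * k.+1 ^ m <= 'C(n, m) ^ 2 * k.+1 ^ n)%N.
Proof.
move=> coverX.
set C := [set P : {set 'I_n * 'I_n} | [&& monotone_pairs P, off_diagonal P & #|P| == m]].
pose matched P := [set S : {ffun 'I_n -> 'I_k.+1} | pairs_matched S P].
have X_cover : X \subset cover (matched @: C).
  apply/subsetP => S /coverX[P /and4P[mP dP cP SP]]; apply/bigcupP.
  by exists (matched P); rewrite ?imset_f // inE ?mP ?dP.
apply: leq_trans (leq_mul (subset_leq_card X_cover) (leqnn _)) _.
apply: leq_trans (leq_mul (leq_card_cover _) (leqnn _)) _.
rewrite big_distrl /=.
apply: (@leq_trans (\sum_(A in matched @: C) k.+1 ^ n)).
  apply: leq_sum => _ /imsetP[P + ->]; rewrite inE => /and3P[mP dP /eqP <-].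
  exact: card_pairs_matched.
rewrite sum_nat_const leq_mul2r (leq_trans (leq_imset_card _ _)) ?orbT //.
apply: leq_trans (card_monotone_pairs m); apply: subset_leq_card.
by apply/subsetP => P; rewrite !inE => /and3P[-> _ ->].
Qed.
End MonotonePairs.

Local Open Scope ring_scope.

Section BinomialBounds.
Variable R : realType.

Lemma exprnn_le_expR_fact m : (m%:R : R) ^+ m <= expR 1 ^+ m * m`!%:R.
Proof.
case: m => [|m]; first by rewrite !expr0 mul1r.
have fact_gt0 : 0 < m.+1`!%:R :> R by rewrite ltr0n fact_gt0.
rewrite -expRM_natl mulr1 -ler_pdivrMr //.
by apply: le_trans (expR_ge1Dxn m (ler0n _ _)); rewrite lerDr.
Qed.

Lemma binomial_expr_le_expR n m (x : R) : 0 <= x -> n%:R * x <= m%:R ->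
  'C(n, m)%:R * x ^+ m <= expR 1 ^+ m.
Proof.
move=> x_ge0 nx_le_m.
have fact_gt0 : 0 < m`!%:R :> R by rewrite ltr0n fact_gt0.
rewrite -(ler_pM2r fact_gt0) mulrAC -natrM bin_ffact.
apply: le_trans (exprnn_le_expR_fact m).
apply: le_trans (_ : (n%:R * x) ^+ m <= _); last by rewrite lerXn2r ?nnegrE ?mulr_ge0.
by rewrite exprMn ler_wpM2r ?exprn_ge0 // -natrX ler_nat ffact_leq_expn.
Qed.

Lemma binomial_sq_le_expn n m k (eps : R) : 0 < eps -> (0 < m)%N ->
  n%:R * eps <= m%:R -> 2 * expR 1 ^+ 2 <= k%:R * eps ^+ 2 ->
  (2 * 'C(n, m) ^ 2 <= k ^ m)%N.
Proof.
move=> eps_gt0 m_gt0 neps_le_m k_large.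
have e_ge0 : 0 <= expR 1 :> R by rewrite ltW ?expR_gt0.
have pos : 0 < (eps ^+ 2) ^+ m by rewrite !exprn_gt0.
rewrite -(ler_nat R) natrM !natrX -(ler_pM2r pos) -exprMn.
have -> : 2%:R * 'C(n, m)%:R ^+ 2 * (eps ^+ 2) ^+ m = 2 * ('C(n, m)%:R * eps ^+ m) ^+ 2.
  by rewrite exprMn [in RHS]exprMn !mulrA.
apply: le_trans (_ : 2 * (expR 1 ^+ m) ^+ 2 <= _).
  rewrite ler_wpM2l // lerXn2r ?nnegrE ?mulr_ge0 ?exprn_ge0 ?(ltW eps_gt0) //.
  exact: binomial_expr_le_expR (ltW eps_gt0) neps_le_m.
apply: le_trans (_ : (2 * expR 1 ^+ 2) ^+ m <= _); last first.
  by rewrite lerXn2r ?nnegrE ?mulr_ge0 ?exprn_ge0 ?ler0n ?(ltW eps_gt0).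
rewrite exprMn -!exprM mulnC exprM ler_wpM2r ?exprn_ge0 //.
by rewrite ler_eXnr // ler1n.
Qed.
End BinomialBounds.

Section SelfMatching.
Variable R : realType.
Implicit Types (eps : R) (n k m : nat).

Lemma exists_least_nat_ge (x : R) : 0 < x ->
  exists m : nat, [/\ (0 < m)%N, x <= m%:R & forall b : nat, x <= b%:R -> (m <= b)%N].
Proof.
move=> x_gt0; have ex_ge : exists b : nat, x <= b%:R.
  by exists (Num.truncn x).+1; have /andP[_ /ltW] := truncn_itv (ltW x_gt0).
case: (ex_minnP ex_ge) => m x_le_m min_m; exists m; split => //.
by rewrite lt0n; apply: contraTneq x_le_m => ->; rewrite -ltNge.
Qed.

Lemma not_self_matching_pairs eps n k (S : {ffun 'I_n -> 'I_k}) m :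
  (forall b : nat, eps * n%:R <= b%:R -> (m <= b)%N) -> ~~ self_matching eps S ->
  exists P : {set 'I_n * 'I_n},
    [&& monotone_pairs P, off_diagonal P, #|P| == m & pairs_matched S P].
Proof.
move=> min_m /forallPn[M]; rewrite negb_imply monotone_matchingE -leNgt.
case/andP=> /andP[SM mM] /min_m /exists_subset_card[P sPB /eqP cP].
have sPM : P \subset M.
  by apply: subset_trans sPB _; apply/subsetP => p; rewrite inE => /andP[].
have dP : off_diagonal P.
  by apply/forall_inP => p /(subsetP sPB); rewrite inE => /andP[].
by exists P; rewrite cP dP (monotone_pairsS sPM mM) (pairs_matchedS sPM SM).
Qed.

Lemma card_self_matching eps n k : 0 < eps -> (0 < n)%N ->
  2 * expR 1 ^+ 2 <= k.+1%:R * eps ^+ 2 ->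
  (k.+1 ^ n <= 2 * #|[set S : {ffun 'I_n -> 'I_k.+1} | self_matching eps S]|)%N.
Proof.
move=> eps_gt0 n_gt0 k_large.
have epsn_gt0 : 0 < eps * n%:R by rewrite mulr_gt0 ?ltr0n.
have [m [m_gt0 epsn_le_m min_m]] := exists_least_nat_ge epsn_gt0.
set G := [set S | _]; set X := ~: G.
have card_X : (#|X| * k.+1 ^ m <= 'C(n, m) ^ 2 * k.+1 ^ n)%N.
  by apply: card_union_matched => S; rewrite !inE; apply: not_self_matching_pairs.
have binom : (2 * 'C(n, m) ^ 2 <= k.+1 ^ m)%N.
  by apply: (binomial_sq_le_expn (R := R) eps_gt0 m_gt0) => //; rewrite mulrC.
have half_X : (2 * #|X| <= k.+1 ^ n)%N.
  rewrite -(leq_pmul2r (expn_gt0 k.+1 m)) -mulnA.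
  rewrite (leq_trans (leq_mul (leqnn 2) card_X)) //.
  by rewrite mulnA mulnC leq_mul2l binom orbT.
have := cardsC G; rewrite -/X card_ffun !card_ord; lia.
Qed.
End SelfMatching.

Theorem theorem35 (R : realType) :
  exists C p : R, 0 < C /\ 0 < p /\
    forall eps : R, 0 < eps < 1 ->
      exists k : nat, (0 < k)%N /\ k%:R <= C / eps ^+ 3 /\
        forall n : nat, (0 < n)%N -> p <= prob_self_matching eps n k.
Proof.
set c := 2 * expR 1 ^+ 2 : R.
have c_gt0 : 0 < c by rewrite mulr_gt0 ?exprn_gt0 ?expR_gt0.
exists (c + 1), (1 / 2); split; first lra; split; first lra.
move=> eps /andP[eps_gt0 eps_lt1].
have eps2_gt0 : 0 < eps ^+ 2 by rewrite exprn_gt0.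
have eps3_gt0 : 0 < eps ^+ 3 by rewrite exprn_gt0.
have /andP[k_le k_gt] := truncn_itv (divr_ge0 (ltW c_gt0) (ltW eps2_gt0)).
set k := Num.truncn _ in k_le k_gt.
exists k.+1; split => //; split.
  rewrite ler_pdivlMr // -natr1 mulrDl mul1r.
  rewrite ler_pdivlMr // in k_le.
  have : k%:R * eps ^+ 3 <= k%:R * eps ^+ 2 by rewrite ler_wpM2l // ler_iXn2l.
  have : eps ^+ 3 <= 1 by rewrite exprn_ile1 ?ltW.
  lra.
move=> n n_gt0; rewrite /prob_self_matching ler_pdivlMr ?ltr0n ?expn_gt0 //.
have k_large : c <= k.+1%:R * eps ^+ 2 by apply: ltW; rewrite -ltr_pdivrMr.
have := card_self_matching eps_gt0 n_gt0 k_large.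
by rewrite -(ler_nat R) natrM; lra.
Qed.
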